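(* Let $S\subseteq\Sigma^n$ be a complementable double-code and $i,i'\in[n]$. Then $\backslash_i\backslash_{i'}S=\backslash_{i'}\backslash_i S$.
   Context: Let $\Sigma=\{0,1,2,3\}$, $[n]=\{1,\ldots,n\}$. An $i$-line of $\Sigma^n$ is a set of the four words that agree in all coordinates except the $i$th; a line is an $i$-line for some $i$. A double-code is a set meeting every line in $0$ or $2$ elements; a double-MDS-code is a set meeting every line in exactly $2$ elements; a double-code is complementable if contained in a double-MDS-code. For $S\subseteq\Sigma^n$ and $i\in[n]$, $\mathcal E_i(S)$ is the union of all $i$-lines that meet $S$, and $\backslash_i S=\mathcal E_i(S)\setminus S$. *)

From mathcomp Require Import all_boot.
Set Implicit Arguments. Unset Strict Implicit. Unset Printing Implicit Defensive.

(* Alphabet Sigma = {0,1,2,3} is 'I_4; coordinates [n] = {1..n} are 'I_n (0-based). *)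
Definition word (n : nat) := {ffun 'I_n -> 'I_4}.

Definition iline (n : nat) (i : 'I_n) (x : word n) : {set word n} :=
  [set y : word n | [forall j : 'I_n, (j != i) ==> (y j == x j)]].

Definition is_line (n : nat) (L : {set word n}) : Prop :=
  exists (i : 'I_n) (x : word n), L = iline i x.

Definition double_code (n : nat) (S : {set word n}) : Prop :=
  forall L : {set word n}, is_line L -> #|L :&: S| = 0 \/ #|L :&: S| = 2.

Definition double_MDS_code (n : nat) (S : {set word n}) : Prop :=
  forall L : {set word n}, is_line L -> #|L :&: S| = 2.

Definition complementable (n : nat) (S : {set word n}) : Prop :=
  double_code S /\ exists M : {set word n}, double_MDS_code M /\ S \subset M.

Definition ext (n : nat) (i : 'I_n) (S : {set word n}) : {set word n} :=
  \bigcup_(x : word n | iline i x :&: S != set0) iline i x.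

Definition bsl (n : nat) (i : 'I_n) (S : {set word n}) : {set word n} :=
  ext i S :\: S.

From mathcomp Require Import all_boot.
Set Implicit Arguments. Unset Strict Implicit. Unset Printing Implicit Defensive.

(* Everything happens in the plane through a word y spanned by coordinates i and
   i', where S becomes a 4 x 4 boolean matrix A whose rows and columns have 0 or 2
   ones, sitting inside a matrix M whose rows and columns all have exactly 2 ones.
   Write R for the set of nonzero rows.  A point (a0, b0) lies in \_i \_i' S iff
   some row of R has a zero in column b0, and either A a0 b0 = 1 or a0 is not in R.
   If A a0 b0 = 1 and every nonzero column had a one in row a0, then every row of
   R would be contained in, hence equal to, row a0, so no row of R would have a
   zero in column b0.  If row a0 is zero, the two ones of row a0 of M leave room
   for only one A-entry in their columns, so these columns are zero and all rows
   of R are the complementary pair of columns; hence column b0 is zero.  This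
   proves one inclusion, and the other one is its transpose. *)

(* The operator \_ inside a plane [A : rel T]: [colbsl] takes the columns
   (first index varying) as lines, [rowbsl] the rows. *)
Definition colbsl (T : finType) (A : rel T) : rel T :=
  fun a b => ~~ A a b && [exists a', A a' b].

Definition rowbsl (T : finType) (A : rel T) : rel T :=
  fun a b => colbsl (fun b a => A a b) b a.

Lemma eq_colbsl (T : finType) (A B : rel T) : A =2 B -> colbsl A =2 colbsl B.
Proof.
by move=> eqAB a b; rewrite /colbsl eqAB; congr andb; apply: eq_existsb => a'.
Qed.

Lemma eq_rowbsl (T : finType) (A B : rel T) : A =2 B -> rowbsl A =2 rowbsl B.
Proof. by move=> eqAB a b; apply: eq_colbsl => b' a'; apply: eqAB. Qed.

Definition line_cards (T : finType) (P : nat -> Prop) (A : rel T) : Prop :=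
  (forall a, P #|[set b | A a b]|) /\ (forall b, P #|[set a | A a b]|).

Lemma line_cardsC (T : finType) (P : nat -> Prop) (A : rel T) :
  line_cards P A -> line_cards P (fun a b => A b a).
Proof. by case=> rows cols; split. Qed.

Section Plane.
Variables (T : finType) (A M : rel T).
Hypothesis card_T : #|T| = 4.
Hypothesis A_code : line_cards (fun k => k = 0 \/ k = 2) A.
Hypothesis M_code : line_cards (fun k => k = 2) M.
Hypothesis AM : subrel A M.

Lemma row_card a b : A a b -> #|[set b | A a b]| = 2.
Proof.
move=> Aab; case: (A_code.1 a) => // /cards0_eq row0.
by have := in_set0 b; rewrite -row0 inE Aab.
Qed.

Lemma col_card a b : A a b -> #|[set a | A a b]| = 2.
Proof.
move=> Aab; case: (A_code.2 b) => // /cards0_eq col0.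
by have := in_set0 a; rewrite -col0 inE Aab.
Qed.

Lemma row_eq_of_sub a a' b : A a b ->
  [set b | A a b] \subset [set b | A a' b] -> [set b | A a b] = [set b | A a' b].
Proof.
move=> Aab sub; have Aa'b : A a' b by have := subsetP sub b; rewrite !inE; apply.
by apply/eqP; rewrite eqEcard sub (row_card Aab) (row_card Aa'b).
Qed.

Lemma zero_row_col a0 a b : ~~ [exists b', A a0 b'] -> M a0 b -> A a b = false.
Proof.
move=> /existsPn row0 Ma0b.
have col_sub : [set a | A a b] \subset [set a | M a b] :\ a0.
  apply/subsetP => a'; rewrite !inE => Aa'b; rewrite AM // andbT.
  by apply: contraNneq (row0 b) => <-.
have : #|[set a | A a b]| <= 1.
  have := M_code.2 b; rewrite (cardsD1 a0) inE Ma0b add1n => -[Mcol].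
  by rewrite -Mcol subset_leq_card.
by apply: contraTF => Aab; rewrite (col_card Aab).
Qed.

Lemma zero_row_rows a0 a b : ~~ [exists b', A a0 b'] -> A a b ->
  [set b | A a b] = ~: [set b | M a0 b].
Proof.
move=> row0 Aab; apply/eqP; rewrite eqEcard.
apply/andP; split; last by rewrite cardsCs setCK card_T M_code.1 (row_card Aab).
apply/subsetP => b'; rewrite !inE => Aab'.
by apply: contraTN Aab' => /(zero_row_col a row0) ->.
Qed.

Lemma colbsl_rowbsl_sub a0 b0 : colbsl (rowbsl A) a0 b0 -> rowbsl (colbsl A) a0 b0.
Proof.
rewrite /rowbsl /colbsl /= => /andP[not_a0 /existsP[a /andP[nAab0 /existsP[b1 Aab1]]]].
case: (boolP (A a0 b0)) => [Aa0b0 | nAa0b0].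
  apply: contraNT nAab0 => /existsPn a0_full.
  have sub : [set b | A a b] \subset [set b | A a0 b].
    apply/subsetP => b; rewrite !inE => Aab.
    move: (a0_full b); rewrite negb_and negbK => /orP[// | /existsPn/(_ a)].
    by rewrite Aab.
  have : b0 \in [set b | A a0 b] by rewrite inE.
  by rewrite -(row_eq_of_sub Aab1 sub) inE.
have row0 : ~~ [exists b, A a0 b] by move: not_a0; rewrite nAa0b0.
apply/andP; split.
  apply/existsPn => a'; apply: contraNN nAab0 => Aa'b0.
  have : b0 \in [set b | A a' b] by rewrite inE.
  by rewrite (zero_row_rows row0 Aa'b0) -(zero_row_rows row0 Aab1) inE.
apply/existsP; exists b1; apply/andP; split; last by apply/existsP; exists a.
by move/existsPn: row0.
Qed.

End Plane.

Lemma colbsl_rowbslC (T : finType) (A M : rel T) : #|T| = 4 ->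
  line_cards (fun k => k = 0 \/ k = 2) A -> line_cards (fun k => k = 2) M ->
  subrel A M -> colbsl (rowbsl A) =2 rowbsl (colbsl A).
Proof.
move=> card_T A_code M_code AM a b; apply/idP/idP.
  exact: (colbsl_rowbsl_sub card_T A_code M_code AM).
(* Transposing the plane swaps both sides up to conversion. *)
exact: (colbsl_rowbsl_sub card_T (line_cardsC A_code) (line_cardsC M_code)
          (fun a b => AM b a)).
Qed.

Section Words.
Variable n : nat.
Implicit Types (x y z : word n) (i j : 'I_n) (T : {set word n}).

Definition upd2 x i j (a b : 'I_4) : word n :=
  [ffun k => if k == i then a else if k == j then b else x k].

Definition slice T y i j : rel 'I_4 := fun a b => upd2 y i j a b \in T.

Lemma upd2_id y i j : upd2 y i j (y i) (y j) = y.
Proof.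
apply/ffunP => k; rewrite ffunE.
by case: (eqVneq k i) => [-> // | _]; case: (eqVneq k j) => [-> | _].
Qed.

Lemma upd2C x i j a b : i != j -> upd2 x i j a b = upd2 x j i b a.
Proof.
move=> ij; apply/ffunP => k; rewrite !ffunE.
by case: (eqVneq k i) => [-> | _] //; rewrite (negbTE ij).
Qed.

Lemma iline_refl i y : y \in iline i y.
Proof. by rewrite inE; apply/forallP => k; apply/implyP. Qed.

Lemma iline_eq i x y : y \in iline i x -> iline i y = iline i x.
Proof.
rewrite inE => /forallP yx; apply/setP => z; rewrite !inE; apply: eq_forallb => k.
by case: (eqVneq k i) => //= ki; move: (yx k); rewrite ki => /eqP ->.
Qed.

Lemma iline_upd2 x i j a b : iline i (upd2 x i j a b) = [set upd2 x i j c b | c : 'I_4].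
Proof.
apply/setP => z; rewrite inE; apply/forallP/imsetP => [zx | [c _ ->] k].
  exists (z i) => //; apply/ffunP => k; rewrite ffunE.
  case: (eqVneq k i) => [-> // | ki].
  by move: (zx k); rewrite ki ffunE (negbTE ki) => /eqP.
by apply/implyP => ki; rewrite !ffunE (negbTE ki).
Qed.

Lemma card_iline_upd2 x i j a b T :
  #|iline i (upd2 x i j a b) :&: T| = #|[set c | upd2 x i j c b \in T]|.
Proof.
have upd2_inj : injective (fun c => upd2 x i j c b).
  by move=> c c' /(congr1 (fun w : word n => w i)); rewrite !ffunE eqxx.
rewrite -(card_imset _ upd2_inj) iline_upd2.
apply: eq_card => z; rewrite inE; apply/andP/imsetP => [[/imsetP[c _ ->] cT] | [c]].
  by exists c; rewrite ?inE.
by rewrite inE => cT ->; split; first exact: imset_f.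
Qed.

Lemma in_bsl i T y : (y \in bsl i T) = (y \notin T) && [exists z in iline i y, z \in T].
Proof.
rewrite in_setD; congr andb; apply/bigcupP/exists_inP => [[x] | [z yz zT]].
  by move=> /set0Pn[z]; rewrite inE => /andP[zx zT] /iline_eq ->; exists z.
by exists y; rewrite ?iline_refl //; apply/set0Pn; exists z; rewrite inE yz.
Qed.

Lemma in_bsl_upd2 x i j a b T :
  (upd2 x i j a b \in bsl i T) = colbsl (slice T x i j) a b.
Proof.
rewrite in_bsl iline_upd2 /colbsl; congr andb.
apply/exists_inP/existsP => [[z /imsetP[c _ ->] cT] | [c cT]]; first by exists c.
by exists (upd2 x i j c b); first exact: imset_f.
Qed.

Lemma in_bsl_upd2r x i j a b T : i != j ->
  (upd2 x i j a b \in bsl j T) = rowbsl (slice T x i j) a b.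
Proof.
move=> ij; rewrite upd2C // in_bsl_upd2.
by apply: eq_colbsl => b' a'; rewrite /slice (upd2C _ _ _ ij).
Qed.

Lemma in_bsl_bsl y i j T : i != j ->
  (y \in bsl i (bsl j T)) = colbsl (rowbsl (slice T y i j)) (y i) (y j).
Proof.
move=> ij; rewrite -{1}(upd2_id y i j) in_bsl_upd2.
by apply: eq_colbsl => a b; rewrite /slice in_bsl_upd2r.
Qed.

Lemma in_bsl_bsl_swap y i j T : i != j ->
  (y \in bsl j (bsl i T)) = rowbsl (colbsl (slice T y i j)) (y i) (y j).
Proof.
move=> ij; rewrite -{1}(upd2_id y i j) in_bsl_upd2r //.
by apply: eq_rowbsl => a b; rewrite /slice in_bsl_upd2.
Qed.

Lemma line_cards_slice (P : nat -> Prop) T y i j : i != j ->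
  (forall L, is_line L -> P #|L :&: T|) -> line_cards P (slice T y i j).
Proof.
move=> ij PT; split=> [a | b].
  have -> : [set b | slice T y i j a b] = [set b | upd2 y j i b a \in T].
    by apply: eq_finset => b; rewrite /slice (upd2C _ _ _ ij).
  by rewrite -(card_iline_upd2 _ _ _ a); apply: PT; exists j, (upd2 y j i a a).
by rewrite -(card_iline_upd2 _ _ _ b); apply: PT; exists i, (upd2 y i j b b).
Qed.

End Words.

Theorem proposition6 (n : nat) (S : {set word n}) (i i' : 'I_n) :
  complementable S -> bsl i (bsl i' S) = bsl i' (bsl i S).
Proof.
move=> [S_code [M [M_code SM]]]; case: (eqVneq i i') => [-> // | ii'].
apply/setP => y; rewrite in_bsl_bsl // in_bsl_bsl_swap //.
apply: (colbsl_rowbslC (card_ord 4)).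
- exact: (@line_cards_slice _ (fun k => k = 0 \/ k = 2) _ y _ _ ii' S_code).
- exact: (@line_cards_slice _ (fun k => k = 2) _ y _ _ ii' M_code).
- by move=> a b; apply: (subsetP SM).
Qed.
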